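(* Let $F$ be a forest on $n\ge 2$ vertices and let $v\in V(F)$. Then $$\frac{\xi(F)}{\xi(F-v)}\le \begin{cases} 2^{\frac{n-3}{2}}+1 & \text{if } n \text{ is odd},\\ 2^{\frac{n-2}{2}}+1 & \text{if } n \text{ is even}.\end{cases}$$
   Context: For a graph $H$, $\xi(H)$ denotes the number of maximum independent sets of $H$ (independent sets of size equal to the independence number $\alpha(H)$); for the graph with no vertices, $\xi=1$. $F-v$ is the graph obtained from $F$ by deleting $v$ and its incident edges. *)

From mathcomp Require Import all_boot all_order all_algebra.
Set Implicit Arguments. Unset Strict Implicit. Unset Printing Implicit Defensive.

(* A finite simple graph is a symmetric irreflexive relation e on a finType T.
   A (sub)graph is given by a vertex set S : {set T}; the graph induced on S. *)

Definition simple_graph (T : finType) (e : rel T) : Prop :=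
  symmetric e /\ irreflexive e.

Definition acyclic (T : finType) (e : rel T) : Prop :=
  forall c : seq T, uniq c -> 2 < size c -> ~~ cycle e c.

Definition indep (T : finType) (e : rel T) (A : {set T}) : bool :=
  [forall x in A, forall y in A, ~~ e x y].

Definition alpha (T : finType) (e : rel T) (S : {set T}) : nat :=
  \max_(A : {set T} | (A \subset S) && indep e A) #|A|.

Definition xi (T : finType) (e : rel T) (S : {set T}) : nat :=
  #|[set A : {set T} | [&& A \subset S, indep e A & #|A| == alpha e S]]|.

From mathcomp Require Import all_boot all_order all_algebra.
From mathcomp Require Import zify.
Import GRing.Theory Num.Theory.
Set Implicit Arguments. Unset Strict Implicit. Unset Printing Implicit Defensive.

(* The maximum independent sets of F that avoid v are maximum independent sets
   of F - v; those containing v become, once v is removed, maximum independent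
   sets of F - N[v].  So xi(F) <= xi(F - v) + xi(F - N[v]).  A forest on m
   vertices has at most 2^(m/2) maximum independent sets: every one contains a
   given leaf u or its neighbour w, and F - N[u], F - N[w] have at most m - 2
   vertices.  If v has a neighbour, F - N[v] has at most n - 2 vertices, whence
   xi(F) <= xi(F - v) + 2^((n-2)/2); if v is isolated, F - N[v] = F - v and
   xi(F) <= 2 xi(F - v).  For odd n, (n-3)/2 = (n-2)/2. *)

Section IndependentSets.

Variables (T : finType) (e : rel T).
Implicit Types (S A B : {set T}) (u v w x y z : T).

Definition max_indep S := [set A : {set T} | [&& A \subset S, indep e A & #|A| == alpha e S]].

Definition non_nbhd S v := [set x in S | (x != v) && ~~ e v x].

Lemma xiE S : xi e S = #|max_indep S|.
Proof. by []. Qed.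

Lemma indepP A : reflect {in A &, forall x y, ~~ e x y} (indep e A).
Proof.
apply: (iffP forall_inP) => [H x y xA yA | H x xA].
- by have /forall_inP := H x xA; apply.
- by apply/forall_inP => y; apply: H.
Qed.

Lemma indepS A B : B \subset A -> indep e A -> indep e B.
Proof.
by move=> /subsetP sBA /indepP iA; apply/indepP => x y xB yB; apply: iA; apply: sBA.
Qed.

Lemma card_le_alpha S A : A \subset S -> indep e A -> #|A| <= alpha e S.
Proof. by move=> sAS iA; apply: (leq_bigmax_cond (P := fun A => _ && _)); rewrite sAS. Qed.

Lemma alpha_le S k :
  (forall A, A \subset S -> indep e A -> #|A| <= k) -> alpha e S <= k.
Proof. by move=> H; apply/bigmax_leqP => A /andP[]; apply: H. Qed.

Lemma alphaS S1 S2 : S1 \subset S2 -> alpha e S1 <= alpha e S2.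
Proof.
by move=> sS12; apply: alpha_le => A sAS1; apply: card_le_alpha; apply: subset_trans sAS1 sS12.
Qed.

Lemma xi_gt0 S : 0 < xi e S.
Proof.
have indep0 : (set0 \subset S) && indep e set0.
  by rewrite sub0set; apply/indepP => x y; rewrite in_set0.
rewrite /xi /alpha (bigmax_eq_arg (F := fun A : {set T} => #|A|) _ indep0).
case: arg_maxnP => // A /andP[sAS iA] _.
by apply/card_gt0P; exists A; rewrite inE sAS iA eqxx.
Qed.

Lemma xi_indep S : indep e S -> xi e S = 1.
Proof.
move=> iS; have alphaE : alpha e S = #|S|.
  by apply/eqP; rewrite eqn_leq card_le_alpha // andbT; apply: alpha_le => A /subset_leq_card.
rewrite /xi -(cards1 S); apply: eq_card => A; rewrite !inE alphaE.
apply/and3P/eqP => [[sAS _ /eqP cA] | ->]; last by rewrite subxx iS.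
by apply/eqP; rewrite eqEcard sAS cA /=.
Qed.

Lemma max_indep_sub S1 S2 A :
  S1 \subset S2 -> A \subset S1 -> A \in max_indep S2 -> A \in max_indep S1.
Proof.
move=> sS12 sAS1; rewrite !inE sAS1 => /and3P[_ iA /eqP cA]; rewrite iA eqn_leq.
by rewrite card_le_alpha // cA alphaS.
Qed.

Lemma card_max_indep_notin S v :
  #|[set A in max_indep S | v \notin A]| <= xi e (S :\ v).
Proof.
rewrite xiE; apply/subset_leq_card/subsetP => A; rewrite inE => /andP[AS vA].
apply: (max_indep_sub (subD1set S v) _ AS).
move: AS; rewrite inE => /and3P[sAS _ _].
by apply/subsetP => x xA; rewrite in_setD1 (subsetP sAS) // andbT; apply: contraNneq vA => <-.
Qed.

Hypotheses (e_sym : symmetric e) (e_irr : irreflexive e).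

Lemma indepU1 v A : indep e A -> {in A, forall x, ~~ e v x} -> indep e (v |: A).
Proof.
move=> /indepP iA vA; apply/indepP => x y; rewrite !in_setU1.
case/predU1P => [->|xA]; case/predU1P => [->|yA]; rewrite ?e_irr //.
- exact: vA.
- by rewrite e_sym; apply: vA.
- exact: iA.
Qed.

Lemma max_indep_dominates S A u :
  A \in max_indep S -> u \in S -> u \notin A -> exists2 z, z \in A & e u z.
Proof.
rewrite inE => /and3P[sAS iA /eqP cA] uS uA.
have [//|noNb] := boolP [exists z in A, e u z]; first by move/exists_inP.
suff : #|u |: A| <= alpha e S by rewrite cardsU1 uA cA ltnn.
apply: card_le_alpha; first by rewrite subUset sub1set uS.
by apply: indepU1 => // z zA; apply: contra noNb => euz; apply/exists_inP; exists z.
Qed.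

Lemma card_max_indep_mem S v :
  #|[set A in max_indep S | v \in A]| <= xi e (non_nbhd S v).
Proof.
rewrite xiE -(@card_in_imset _ _ (fun A => A :\ v)); last first.
  move=> A B; rewrite !inE => /andP[_ vA] /andP[_ vB] /= eqAB.
  by rewrite -(setD1K vA) -(setD1K vB) eqAB.
apply/subset_leq_card/subsetP => _ /imsetP[A + ->]; rewrite !inE.
case/andP=> /and3P[sAS iA /eqP cA] vA.
have sAvS : A :\ v \subset non_nbhd S v.
  apply/subsetP => x; rewrite in_setD1 inE => /andP[xv xA].
  by rewrite xv (subsetP sAS) //=; move/indepP: iA; apply.
have iAv : indep e (A :\ v) := indepS (subD1set A v) iA.
rewrite sAvS iAv eqn_leq card_le_alpha //=.
apply: alpha_le => B sB iB.
have vB : v \notin B by apply/negP => /(subsetP sB); rewrite inE eqxx andbF.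
have sBS : B \subset S by apply/subsetP => x /(subsetP sB); rewrite inE => /andP[].
have : #|v |: B| <= #|A|.
  rewrite cA; apply: card_le_alpha; first by rewrite subUset sub1set sBS (subsetP sAS).
  by apply: indepU1 => // x /(subsetP sB); rewrite inE => /and3P[].
by rewrite cardsU1 vB (cardsD1 v A) vA.
Qed.

Lemma xi_le_split S v : xi e S <= xi e (S :\ v) + xi e (non_nbhd S v).
Proof.
rewrite addnC; apply: leq_trans (leq_add (card_max_indep_mem S v) (card_max_indep_notin S v)).
rewrite xiE; apply: leq_trans (leq_card_setU _ _); apply/subset_leq_card/subsetP => A AS.
by rewrite in_setU !setIdE !in_setI AS !inE; case: (v \in A).
Qed.

Lemma card_non_nbhd S u w :
  u \in S -> w \in S -> e u w -> (#|non_nbhd S u|).+2 <= #|S|.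
Proof.
move=> uS wS euw; have wu : w != u by apply: contraTneq euw => ->; rewrite e_irr.
rewrite (cardsD1 u S) uS (cardsD1 w (S :\ u)) !inE wu wS !add1n !ltnS.
apply/subset_leq_card/subsetP => x; rewrite !inE => /and3P[xS xu Nux].
by rewrite xu xS !andbT; apply: contraNneq Nux => ->.
Qed.

Lemma xi_le_leaf S u w : u \in S -> {in S, forall z, e u z -> z = w} ->
  xi e S <= xi e (non_nbhd S u) + xi e (non_nbhd S w).
Proof.
move=> uS leaf_u.
apply: leq_trans (leq_add (card_max_indep_mem S u) (card_max_indep_mem S w)).
rewrite xiE; apply: leq_trans (leq_card_setU _ _); apply/subset_leq_card/subsetP => A AS.
rewrite in_setU !setIdE !in_setI AS !inE; have [//|uA] := boolP (u \in A).
have [z zA euz] := max_indep_dominates AS uS uA.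
move: AS; rewrite inE => /and3P[sAS _ _].
by rewrite -(leaf_u z) // (subsetP sAS).
Qed.

Hypothesis e_acyc : acyclic e.

Lemma acyclic_path_chord x y p z :
  uniq [:: x, y & p] -> path e x (y :: p) -> z \in p -> ~~ e x z.
Proof.
move=> uxp pxp zp; case/splitPr: zp uxp pxp => p1 p2 uxp pxp; apply/negP => exz.
have uc : uniq [:: x, y & rcons p1 z].
  by move: uxp; rewrite -cat_rcons -!cat_cons cat_uniq => /andP[].
have size_c : 2 < size [:: x, y & rcons p1 z] by rewrite /= size_rcons.
have /negP[] := e_acyc uc size_c.
move: pxp; rewrite -cat_cons cat_path => /andP[pxp1 /= /andP[elz _]].
move: pxp1 => /= /andP[-> py1].
by rewrite !rcons_path py1 last_rcons elz e_sym exz.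
Qed.

Lemma exists_leaf S x y p :
  uniq [:: x, y & p] -> {subset [:: x, y & p] <= S} -> path e x (y :: p) ->
  exists u w, [/\ u \in S, w \in S, e u w & {in S, forall z, e u z -> z = w}].
Proof.
(* Extend the path at x while x has a new neighbour in S; once it has none,
   acyclicity leaves y as its only neighbour. *)
have [k] := ubnP (#|T| - size p); elim: k x y p => [|k IH] x y p // lt_k uxp sxp pxp.
have [z /and3P[zS exz zNp] | noext] :=
  pickP [pred z | [&& z \in S, e x z & z \notin [:: x, y & p]]].
- have uzp : uniq [:: z, x, y & p] by rewrite /= zNp.
  have size_p : size [:: z, x, y & p] <= #|T| by move/card_uniqP: uzp => <-; apply: max_card.
  apply: (IH z x (y :: p)).
  + (* naming #|T| keeps [/=] from unfolding it *)
    by move: size_p lt_k; set n := #|T| => /= size_p lt_k; lia.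
  + by rewrite /= zNp.
  + by move=> t; rewrite inE => /predU1P[-> //|]; apply: sxp.
  + by rewrite /= [e z x]e_sym exz.
exists x, y; split.
- by apply: sxp; rewrite inE eqxx.
- by apply: sxp; rewrite !inE eqxx orbT.
- by case/andP: pxp.
move=> z zS exz; have := noext z; rewrite /= zS exz /= => /negbFE.
rewrite !inE => /or3P[/eqP zx | /eqP // | zp]; first by move: exz; rewrite zx e_irr.
by move: exz; rewrite (negbTE (acyclic_path_chord uxp pxp zp)).
Qed.

Lemma xi_forest_le S : xi e S <= 2 ^ #|S|./2.
Proof.
have [n] := ubnP #|S|; elim: n S => // n IH S /ltnSE le_Sn.
have [/exists_inP[x xS /exists_inP[y yS exy]] | noEdge] :=
  boolP [exists x in S, exists y in S, e x y]; last first.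
  rewrite xi_indep ?expn_gt0 //; apply/indepP => x y xS yS; apply: contra noEdge => exy.
  by apply/exists_inP; exists x => //; apply/exists_inP; exists y.
have uxy : uniq [:: x; y] by rewrite /= inE andbT; apply: contraTneq exy => ->; rewrite e_irr.
have sxy : {subset [:: x; y] <= S} by apply/allP; rewrite /= xS yS.
have pxy : path e x [:: y] by rewrite /= exy.
have [u [w [uS wS euw leaf_u]]] := exists_leaf uxy sxy pxy.
have [m Sm] : exists m, #|S| = m.+2.
  by exists #|S|.-2; have := card_non_nbhd uS wS euw; lia.
have xi_nbhd_le a b : a \in S -> b \in S -> e a b -> xi e (non_nbhd S a) <= 2 ^ m./2.
  move=> aS bS eab; have := card_non_nbhd aS bS eab; rewrite Sm !ltnS => card_le.
  have lt_n : #|non_nbhd S a| < n by move: le_Sn; rewrite Sm; lia.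
  exact: leq_trans (IH _ lt_n) (leq_pexp2l _ (half_leq card_le)).
apply: leq_trans (xi_le_leaf uS leaf_u) _.
rewrite Sm /= expnS mul2n -addnn leq_add ?(xi_nbhd_le _ _ uS wS euw) //.
by apply: (xi_nbhd_le _ _ wS uS); rewrite e_sym.
Qed.

End IndependentSets.

Local Open Scope ring_scope.

Theorem lemma3 (T : finType) (e : rel T) (v : T) :
  simple_graph e -> acyclic e -> (2 <= #|T|)%N ->
  ((xi e [set: T])%:R / (xi e [set~ v])%:R : rat)
    <= (if odd #|T| then 2 ^+ ((#|T| - 3) %/ 2) + 1
        else 2 ^+ ((#|T| - 2) %/ 2) + 1).
Proof.
move=> [e_sym e_irr] e_acyc n_ge2.
set m := ((#|T| - 2) %/ 2)%N.
have -> : (if odd #|T| then 2 ^+ ((#|T| - 3) %/ 2) + 1 else 2 ^+ m + 1) = (2 ^ m + 1)%N%:R :> rat.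
  rewrite natrD natrX; case: ifP => // odd_n; congr (2 ^+ _ + 1).
  by have := modn2 #|T|; rewrite odd_n /m; lia.
rewrite ler_pdivrMr ?ltr0n ?xi_gt0 // -natrM ler_nat -setTD.
apply: leq_trans (xi_le_split e_sym e_irr _ v) _.
rewrite mulnDl mul1n addnC leq_add2r.
have [/existsP[w evw] | isolated] := boolP [exists w, e v w].
  have := card_non_nbhd e_irr (in_setT v) (in_setT w) evw; rewrite cardsT => card_le.
  apply: leq_trans (xi_forest_le e_sym e_irr e_acyc _) _.
  apply: leq_trans (leq_pmulr _ (xi_gt0 _ _)); rewrite leq_exp2l // -divn2 leq_div2r //.
  by rewrite leq_subRL // (leq_trans _ card_le) // -addn2.
suff -> : non_nbhd e [set: T] v = [set: T] :\ v by rewrite leq_pmull ?expn_gt0.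
apply/setP => x; rewrite !inE andbT; case: eqP => //= _.
by apply: contraNN isolated => evx; apply/existsP; exists x.
Qed.
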